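(* Let $X_\Sigma$ be a projective toric variety. For each primitive collection $C$ of $\Sigma$ there is a one-parameter subgroup $\lambda(C)\in\Gamma(G)$ such that for every point $x\in V(x_\rho:\rho\in C)\subset\mathbf C^{\Sigma(1)}$ and every ample divisor $D$ on $X_\Sigma$, the limit $\lim_{t\to0}\lambda(C)(t)\cdot x$ exists and $\langle\chi_D,\lambda(C)\rangle<0$ (i.e. $\lambda(C)$ fails the Hilbert–Mumford criterion for $x$ with respect to $\chi_D$). Moreover, if $\Sigma$ is simplicial, $-\lambda(C)$ is a positive integer multiple of the primitive relation of $C$.
   Context: $\Sigma$ is a complete fan in $N_{\mathbf R}$ ($N$ a lattice) with rays $\Sigma(1)$, primitive ray generators $u_\rho$, torus-invariant divisors $D_\rho$. A primitive collection is a subset $C\subset\Sigma(1)$ not contained in $\sigma(1)$ for any cone $\sigma\in\Sigma$, every proper subset of which is contained in some $\sigma(1)$. $G=\mathrm{Hom}_{\mathbf Z}(\mathrm{Cl}(X_\Sigma),\mathbf C^\times)\subset(\mathbf C^\times)^{\Sigma(1)}$ acts coordinatewise on $\mathbf C^{\Sigma(1)}=\mathrm{Spec}\,\mathbf C[x_\rho:\rho\in\Sigma(1)]$; its one-parameter subgroups are $\Gamma(G)=\{b\in\mathbf Z^{\Sigma(1)}:\sum_\rho b_\rho u_\rho=0\}$ acting by $b(t)\cdot x=(t^{b_\rho}x_\rho)_\rho$, and for a divisor $D=\sum_\rho a_\rho D_\rho$ with associated character $\chi_D$ of $G$, $\langle\chi_D,b\rangle=\sum_\rho a_\rho b_\rho$.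 Primitive relation (for $\Sigma$ simplicial): $u=\sum_{\rho\in C}u_\rho$ lies in the relative interior of a unique cone $\sigma\in\Sigma$, and $u=\sum_{\rho\in\sigma(1)}q_\rho u_\rho$ with unique $q_\rho\in\mathbf Q_{\ge0}$; the primitive relation of $C$ is $r\in\mathbf Q^{\Sigma(1)}$ with $r_\rho=1$ for $\rho\in C\setminus\sigma(1)$, $r_\rho=1-q_\rho$ for $\rho\in C\cap\sigma(1)$, $r_\rho=-q_\rho$ for $\rho\in\sigma(1)\setminus C$, and $r_\rho=0$ otherwise. *)

(* Combinatorial model of a toric variety X_Sigma:
   N = Z^n, rays indexed by 'I_r with primitive generators u i : 'rV[int]_n,
   the fan Sigma given by the sets sigma(1) of its cones. *)
From mathcomp Require Import all_boot all_order all_algebra.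
From mathcomp Require Export complex.
From mathcomp Require Export reals.
Set Implicit Arguments.
Unset Strict Implicit.
Unset Printing Implicit Defensive.
Import Order.TTheory GRing.Theory Num.Theory.
Local Open Scope ring_scope.

Section Toric.
Variables (R : realType) (n r : nat) (u : 'I_r -> 'rV[int]_n).

Definition dotZ (m v : 'rV[int]_n) : int := \sum_(k < n) m 0 k * v 0 k.
Definition dotR (m v : 'rV[R]_n) : R := \sum_(k < n) m 0 k * v 0 k.

Definition uR (i : 'I_r) : 'rV[R]_n := map_mx (fun z : int => z%:~R) (u i).

Definition in_cone (S : {set 'I_r}) (v : 'rV[R]_n) : Prop :=
  exists c : 'I_r -> R, (forall i, 0 <= c i) /\ (forall i, i \notin S -> c i = 0)
    /\ v = \sum_(i < r) c i *: uR i.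

Definition is_face (S : {set 'I_r}) (F : 'rV[R]_n -> Prop) : Prop :=
  exists m : 'rV[R]_n, (forall v, in_cone S v -> 0 <= dotR m v) /\
    (forall v, F v <-> (in_cone S v /\ dotR m v = 0)).

(* v lies in the relative interior of Cone(S): in the cone, but in no proper face *)
Definition in_relint (S : {set 'I_r}) (v : 'rV[R]_n) : Prop :=
  in_cone S v /\
  (forall F, is_face S F -> F v -> forall w, in_cone S w -> F w).

Definition primitive_vec (w : 'rV[int]_n) : Prop :=
  \big[gcdn/0%N]_(k < n) absz (w ord0 k) = 1%N.

(* Sigma is a fan whose rays are exactly the rays with primitive generators u i,
   and for sigma in Sigma, S = sigma(1). *)
Definition is_fan (Sigma : {set {set 'I_r}}) : Prop :=
  (forall i, primitive_vec (u i)) /\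
  (forall i, [set i] \in Sigma) /\
  (forall S, S \in Sigma -> forall v, in_cone S v -> in_cone S (- v) -> v = 0) /\
  (forall S, S \in Sigma -> forall i, in_cone S (uR i) <-> i \in S) /\
  (forall S, S \in Sigma -> forall F, is_face S F ->
      exists2 T, T \in Sigma & forall v, F v <-> in_cone T v) /\
  (forall S T, S \in Sigma -> T \in Sigma ->
      is_face S (fun v => in_cone S v /\ in_cone T v) /\
      is_face T (fun v => in_cone S v /\ in_cone T v)).

Definition complete_fan (Sigma : {set {set 'I_r}}) : Prop :=
  forall v : 'rV[R]_n, exists2 S, S \in Sigma & in_cone S v.

Definition simplicial (Sigma : {set {set 'I_r}}) : Prop :=
  forall S, S \in Sigma -> forall c : 'I_r -> R,
    (forall i, i \notin S -> c i = 0) -> \sum_(i < r) c i *: uR i = 0 ->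
    forall i, c i = 0.

End Toric.

Arguments in_cone R {n r} u S v.
Arguments is_face R {n r} u S F.
Arguments in_relint R {n r} u S v.

Section Divisors.
Variables (n r : nat) (u : 'I_r -> 'rV[int]_n) (Sigma : {set {set 'I_r}}).

Definition maximal_cone (S : {set 'I_r}) : Prop :=
  S \in Sigma /\ forall T, T \in Sigma -> ~~ (S \proper T).

(* D = sum_rho a rho D_rho is Cartier with Cartier data m, and ample
   (for complete Sigma: <m_sigma,u_rho> > -a_rho for maximal sigma, rho notin sigma(1);
   CLS Thm 6.1.14). *)
Definition ample (a : 'I_r -> int) : Prop :=
  exists m : {set 'I_r} -> 'rV[int]_n,
    (forall S, S \in Sigma -> forall i, i \in S -> dotZ (m S) (u i) = - a i) /\
    (forall S, maximal_cone S -> forall i, i \notin S -> - a i < dotZ (m S) (u i)).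

Definition projective : Prop := exists a, ample a.

(* one-parameter subgroups of G *)
Definition in_Gamma (b : 'I_r -> int) : Prop := \sum_(i < r) b i *: u i = 0.

Definition pairing (a b : 'I_r -> int) : int := \sum_(i < r) a i * b i.

Definition primitive_collection (C : {set 'I_r}) : Prop :=
  (forall S, S \in Sigma -> ~~ (C \subset S)) /\
  (forall C' : {set 'I_r}, C' \proper C -> exists2 S, S \in Sigma & C' \subset S).

(* the primitive relation of C, with u_C in relint of the cone with sigma(1) = S,
   u_C = sum_{rho in S} q rho u_rho *)
Definition prim_rel (C S : {set 'I_r}) (q : 'I_r -> rat) (i : 'I_r) : rat :=
  if i \in C then (if i \in S then 1 - q i else 1)
  else (if i \in S then - q i else 0).

End Divisors.

Section Limits.
Variables (R : realType) (r : nat).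

Definition limit_exists (b : 'I_r -> int) (x : 'I_r -> R[i]) : Prop :=
  exists l : 'I_r -> R[i], forall e : R, 0 < e -> exists2 d : R, 0 < d &
    forall t : R[i], t != 0 -> `|t| < (d%:C)%C ->
      forall j, `|t ^ b j * x j - l j| < (e%:C)%C.

End Limits.

From mathcomp Require Import all_boot all_order all_algebra complex reals.
From mathcomp Require Import lra ring.
Set Implicit Arguments.
Unset Strict Implicit.
Unset Printing Implicit Defensive.
Import Order.TTheory GRing.Theory Num.Theory.
Local Open Scope ring_scope.

(* Since Sigma is complete, u_C = sum_(rho in C) u_rho lies in a cone sigma of
   Sigma.  As u_C is rational, it is a nonnegative rational combination of the
   rays of sigma (rational solutions of a rational linear system are dense in
   its real solutions); clearing denominators gives
   k u_C = sum_(rho in sigma(1)) c_rho u_rho with c_rho in N, so that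
   lambda := c - k e_C lies in Gamma(G).  The weights of lambda are nonnegative
   outside C, hence lambda(t) x converges as t -> 0 when x vanishes on C.  For
   an ample D with Cartier data m_tau on a maximal cone tau containing sigma,
   <chi_D, lambda> = sum_rho (a_rho + <m_tau, u_rho>) lambda_rho: the terms
   with rho in tau(1) vanish, the others are (positive) * (nonpositive), and one
   of them is negative because C is not contained in tau(1).  When Sigma is
   simplicial the coefficients of u_C on sigma are unique, which identifies
   -lambda with k times the primitive relation. *)

Lemma limit_exists_nonneg (R : realType) r (lam : 'I_r -> int) (x : 'I_r -> R[i]) :
  (forall j, x j != 0 -> 0 <= lam j) -> limit_exists lam x.
Proof.
move=> lam_ge0.
exists (fun j => if lam j == 0 then x j else 0) => e e_gt0.
pose B : R := \sum_j complex.Re `|x j|.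
have Re_norm_ge0 j : 0 <= complex.Re `|x j| by rewrite normc_def /= sqrtr_ge0.
have B_ge0 : 0 <= B by exact: sumr_ge0.
have normx_le j : `|x j| <= (B%:C)%C.
  have -> : `|x j| = ((complex.Re `|x j|)%:C)%C by case: (x j).
  by rewrite lecR /B (bigD1 j) // lerDl; exact: sumr_ge0.
pose d := e / (e + 1 + B).
have d_gt0 : 0 < d by rewrite divr_gt0 //; lra.
have d_lt1 : d < 1 by rewrite ltr_pdivrMr ?mul1r; lra.
have dB_lt : d * B < e.
  rewrite mulrAC ltr_pdivrMr; last lra.
  by have := mulr_ge0 (ltW e_gt0) B_ge0; nra.
exists d => // t _ t_lt j.
have [->|xj_neq0] := eqVneq (x j) 0; first by rewrite mulr0 if_same subrr normr0 ltcR.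
case: (lam j) (lam_ge0 _ xj_neq0) => // [[|m]] _ /=.
  by rewrite expr0z mul1r subrr normr0 ltcR.
have t_lt1 : `|t| < 1 by rewrite (lt_trans t_lt) // ltcR.
have tm_le : `|t| ^+ m.+1 <= (d%:C)%C.
  by rewrite (le_trans _ (ltW t_lt)) // exprSr ler_piMl // exprn_ile1 // ltW.
rewrite /= subr0 normrM normrX.
apply: (@le_lt_trans _ _ ((d%:C)%C * (B%:C)%C)); last by rewrite -rmorphM ltcR.
by rewrite ler_pM ?exprn_ge0.
Qed.

Lemma exists_maximal_cone r (Sigma : {set {set 'I_r}}) S :
  S \in Sigma -> exists2 T, maximal_cone Sigma T & S \subset T.
Proof.
move=> S_in; have [T /maxsetP[T_in T_max] ST] := @maxset_exists _ (mem Sigma) S S_in.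
exists T => //; split=> // T' T'_in.
apply/negP => /properP[TT' [i iT' iT]].
by move: iT; rewrite -(T_max T' T'_in TT') iT'.
Qed.

Lemma relint_cone_subset (R : realType) n r (u : 'I_r -> 'rV[int]_n) Sigma S T
    (v : 'rV[R]_n) :
  is_fan R u Sigma -> S \in Sigma -> T \in Sigma ->
  in_relint R u S v -> in_cone R u T v -> S \subset T.
Proof.
move=> [_ [_ [_ [rays [_ inter]]]]] S_in T_in [vS v_relint] vT.
have [face_ST _] := inter S T S_in T_in.
apply/subsetP => i iS.
have [_ /(rays T T_in i).1 //] :=
  v_relint _ face_ST (conj vS vT) (uR R u i) ((rays S S_in i).2 iS).
Qed.

Section Pairing.
Variables (n r : nat) (u : 'I_r -> 'rV[int]_n) (Sigma : {set {set 'I_r}}).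

Lemma dotZ_sum (m : 'rV[int]_n) (c : 'I_r -> int) :
  dotZ m (\sum_j c j *: u j) = \sum_j c j * dotZ m (u j).
Proof.
rewrite /dotZ; under eq_bigr do rewrite summxE mulr_sumr.
rewrite exchange_big /=; apply: eq_bigr => j _.
by rewrite mulr_sumr; apply: eq_bigr => k _; rewrite mxE mulrCA.
Qed.

Lemma pairing_in_Gamma (a lam : 'I_r -> int) (m : 'rV[int]_n) :
  in_Gamma u lam -> pairing a lam = \sum_j (a j + dotZ m (u j)) * lam j.
Proof.
move=> lam_Gamma.
have m_lam : \sum_j lam j * dotZ m (u j) = 0.
  by rewrite -dotZ_sum lam_Gamma /dotZ big1 // => k _; rewrite mxE mulr0.
transitivity (pairing a lam + \sum_j lam j * dotZ m (u j)); first by rewrite m_lam addr0.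
rewrite -big_split.
by apply: eq_bigr => j _ /=; rewrite mulrDl [dotZ _ _ * _]mulrC.
Qed.

Lemma ample_pairing_lt0 (a lam : 'I_r -> int) T j0 :
  ample u Sigma a -> in_Gamma u lam -> maximal_cone Sigma T ->
  (forall j, j \notin T -> lam j <= 0) -> j0 \notin T -> lam j0 < 0 ->
  pairing a lam < 0.
Proof.
move=> [m [m_eq m_gt]] lam_Gamma T_max lam_le0 j0T lam_j0.
have coef_gt0 j : j \notin T -> 0 < a j + dotZ (m T) (u j).
  by move=> jT; rewrite addrC -[a j]opprK subr_gt0 m_gt.
have term_le0 j : (a j + dotZ (m T) (u j)) * lam j <= 0.
  have [jT|jT] := boolP (j \in T); first by rewrite m_eq ?T_max.1 // addrN mul0r.
  by rewrite pmulr_rle0 ?coef_gt0 ?lam_le0.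
rewrite (pairing_in_Gamma a (m T) lam_Gamma) (bigD1 j0) //=.
rewrite -[0]addr0 ltr_leD ?pmulr_rlt0 ?coef_gt0 //.
by apply: sumr_le0 => j _; exact: term_le0.
Qed.

End Pairing.

Lemma common_denominator (I : finType) (q : I -> rat) :
  exists2 k : nat, (0 < k)%N & exists c : I -> int, forall j, (c j)%:~R = k%:R * q j.
Proof.
exists (\prod_j `|denq (q j)|)%N.
  by rewrite prodn_gt0 // => j; rewrite absz_gt0 denq_neq0.
exists (fun j => numq (q j) * \prod_(i | i != j) denq (q i)) => j.
have denE i : (`|denq (q i)|%:R : rat) = (denq (q i))%:~R.
  by rewrite natr_absz gtr0_norm ?denq_gt0.
rewrite natr_prod [in RHS](bigD1 j) //= intrM numqE rmorph_prod /= denE.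
by under [in RHS]eq_bigr do rewrite denE; ring.
Qed.

Lemma rat_row_near (R : archiRealFieldType) m (D : 'rV[R]_m) (d : R) :
  0 < d -> exists E : 'rV[rat]_m, forall l, `|ratr (E 0 l) - D 0 l| < d.
Proof.
move=> d_gt0.
have near l : exists q : rat, `|ratr q - D 0 l| < d.
  have [q] := @rat_in_itvoo R (D 0 l - d) (D 0 l + d) ltac:(lra).
  by rewrite in_itv /= => ltq; exists q; rewrite ltr_distl.
by exists (\row_l xchoose (near l)) => l; rewrite mxE; exact: (xchooseP (near l)).
Qed.

Lemma norm_mulmx_le (R : realFieldType) m p (v : 'rV[R]_m) (K : 'M[R]_(m, p)) (d : R) j :
  (forall l, `|v 0 l| <= d) -> `|(v *m K) 0 j| <= d * \sum_l `|K l j|.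
Proof.
move=> v_le; rewrite mxE mulr_sumr (le_trans (ler_norm_sum _ _ _)) //.
by apply: ler_sum => l _; rewrite normrM ler_wpM2r.
Qed.

Lemma rat_solution_near (R : archiRealFieldType) m p (M : 'M[rat]_(m, p))
    (w : 'rV[rat]_p) (y : 'rV[R]_m) (e : R) :
  0 < e -> y *m map_mx ratr M = map_mx ratr w ->
  exists2 z : 'rV[rat]_m, z *m M = w & forall j, `|ratr (z 0 j) - y 0 j| < e.
Proof.
(* The real solutions are z0 + D K with z0 and K rational; round D. *)
move=> e_gt0 yM.
have wM : (w <= M)%MS by rewrite -(map_submx (@ratr R)) -yM submxMl.
pose z0 := w *m pinvmx M.
have z0M : z0 *m M = w := mulmxKpV wM.
pose K := kermx M.
have : (y - map_mx ratr z0 <= map_mx ratr K)%MS.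
  by rewrite map_kermx; apply/sub_kermxP; rewrite mulmxBl yM -map_mxM z0M subrr.
case/submxP => D yE.
pose Kb : R := \sum_j \sum_l `|ratr (K l j) : R|.
have Kb_ge0 : 0 <= Kb by do 2!apply: sumr_ge0 => ? _.
have [|E E_near] := rat_row_near D (d := e / (Kb + 1)); first by rewrite divr_gt0 //; lra.
exists (z0 + E *m K); first by rewrite mulmxDl z0M -mulmxA mulmx_ker mulmx0 addr0.
have diffE : map_mx ratr (z0 + E *m K) - y = (map_mx ratr E - D) *m map_mx ratr K.
  by rewrite mulmxBl -map_mxM -yE opprB map_mxD addrA [_ + map_mx ratr z0]addrC.
move=> j; rewrite [ratr _ - _](_ : _ = ((map_mx ratr E - D) *m map_mx ratr K) 0 j); last first.
  by rewrite -diffE !mxE.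
have col_le : \sum_l `|ratr (K l j) : R| <= Kb.
  by rewrite /Kb [X in _ <= X](bigD1 j) //= lerDl; do 2!apply: sumr_ge0 => ? _.
apply: (le_lt_trans (norm_mulmx_le _ (d := e / (Kb + 1)) j _)).
  by move=> l; rewrite !mxE ltW.
under eq_bigr do rewrite mxE.
apply: (le_lt_trans (ler_wpM2l _ col_le)); first by rewrite divr_ge0 //; lra.
by rewrite mulrAC ltr_pdivrMr; nra.
Qed.

Lemma rat_cone (R : realType) n r (u : 'I_r -> 'rV[int]_n) S (w : 'rV[rat]_n) :
  in_cone R u S (map_mx ratr w) ->
  exists q : 'I_r -> rat, [/\ forall j, 0 <= q j, forall j, j \notin S -> q j = 0
    & map_mx ratr w = \sum_j (ratr (q j) : R) *: uR R u j].
Proof.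
move=> [c [c_ge0 [c_supp wE]]].
pose P := [set j | 0 < c j].
have c_off j : j \notin P -> c j = 0.
  by rewrite inE => c_le0; apply/eqP; rewrite eq_le c_ge0 andbT leNgt.
pose M : 'M[rat]_(r, n) := \matrix_(j, k) (if j \in P then (u j 0 k)%:~R else 0).
have cM : \row_j c j *m map_mx ratr M = map_mx ratr w.
  rewrite wE; apply/rowP => k; rewrite !mxE summxE; apply: eq_bigr => j _.
  rewrite !mxE; have [jP|jP] := boolP (j \in P); first by rewrite ratr_int.
  by rewrite c_off // rmorph0 !mul0r.
pose e := \big[Order.min/1]_(j in P) c j.
have e_gt0 : 0 < e by apply/bigmin_gtP; split=> // j; rewrite inE.
have [z zM z_near] := rat_solution_near e_gt0 cM.
exists (fun j => if j \in P then z 0 j else 0); split.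
- move=> j; case: ifPn => // jP; rewrite -(ler0q R).
  have := z_near j; rewrite mxE ltr_distl => /andP[lt_z _].
  have : e <= c j by apply: bigmin_le_cond.
  lra.
- by move=> j jS; case: ifPn => // jP; move: jP; rewrite inE c_supp ?ltxx.
- rewrite -zM; apply/rowP => k; rewrite !mxE summxE rmorph_sum; apply: eq_bigr => j _.
  rewrite !mxE rmorphM /=; case: ifP => jP; first by rewrite ratr_int.
  by rewrite rmorph0 !mulr0 mul0r.
Qed.

Lemma int_relation (R : realType) n r (u : 'I_r -> 'rV[int]_n) (C : {set 'I_r})
    (q : 'I_r -> rat) (k : nat) (c : 'I_r -> int) :
  (forall j, (c j)%:~R = k%:R * q j) ->
  \sum_(j in C) uR R u j = \sum_j (ratr (q j) : R) *: uR R u j ->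
  (\sum_(j in C) u j) *+ k = \sum_j c j *: u j.
Proof.
move=> cE rel; apply/rowP => i; move/rowP/(_ i): rel; rewrite !summxE => rel.
apply: (@intr_inj R); rewrite mulmxnE summxE rmorphMn rmorph_sum /=.
have -> : \sum_(j in C) ((u j 0 i)%:~R : R) = \sum_(j in C) uR R u j 0 i.
  by apply: eq_bigr => j _; rewrite mxE.
rewrite rel rmorph_sum /= -sumrMnl; apply: eq_bigr => j _.
by rewrite !mxE intrM -[(c j)%:~R]ratr_int cE rmorphM /= ratr_nat -mulr_natr; ring.
Qed.

Lemma simplicial_coef_unique (R : realType) n r (u : 'I_r -> 'rV[int]_n) Sigma S
    (p q : 'I_r -> R) :
  simplicial R u Sigma -> S \in Sigma ->
  (forall j, j \notin S -> p j = 0) -> (forall j, j \notin S -> q j = 0) ->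
  \sum_j p j *: uR R u j = \sum_j q j *: uR R u j -> p =1 q.
Proof.
move=> simp S_in p_supp q_supp pq j; apply/eqP; rewrite -subr_eq0; apply/eqP.
move: j; apply: (simp S S_in (fun j => p j - q j)).
  by move=> j jS; rewrite p_supp ?q_supp ?subrr.
by under eq_bigr do rewrite scalerBl; rewrite sumrB pq subrr.
Qed.

Section OneParameterSubgroup.
Variables (n r : nat) (u : 'I_r -> 'rV[int]_n) (C : {set 'I_r}).

Definition ops_of_relation (k : nat) (c : 'I_r -> int) (j : 'I_r) : int :=
  c j - (if j \in C then k%:Z else 0).

Lemma ops_of_relation_in_Gamma k c :
  (\sum_(j in C) u j) *+ k = \sum_j c j *: u j -> in_Gamma u (ops_of_relation k c).
Proof.
move=> rel; rewrite /in_Gamma /ops_of_relation.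
under eq_bigr do rewrite scalerBl.
rewrite sumrB -rel; apply/eqP; rewrite subr_eq0 -sumrMnl big_mkcond /=.
apply/eqP/eq_bigr => j _.
by case: (j \in C); rewrite ?scale0r // -natz scaler_nat.
Qed.

Lemma ops_of_relation_limit (R : realType) k c (x : 'I_r -> R[i]) :
  (forall j, 0 <= c j) -> (forall j, j \in C -> x j = 0) ->
  limit_exists (ops_of_relation k c) x.
Proof.
move=> c_ge0 x_C; apply: limit_exists_nonneg => j; rewrite /ops_of_relation.
by case: ifPn => [/x_C ->|_]; rewrite ?eqxx // subr0.
Qed.

Lemma ops_of_relation_pairing_lt0 Sigma S k c a :
  primitive_collection Sigma C -> S \in Sigma -> (0 < k)%N ->
  (forall j, j \notin S -> c j = 0) -> ample u Sigma a ->
  in_Gamma u (ops_of_relation k c) -> pairing a (ops_of_relation k c) < 0.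
Proof.
move=> [C_not_cone _] S_in k_gt0 c_supp a_ample lam_Gamma.
have [T T_max ST] := exists_maximal_cone S_in.
have /subsetPn[j0 j0C j0T] := C_not_cone T T_max.1.
have c_offT j : j \notin T -> c j = 0.
  by move=> jT; apply: c_supp; apply: contra jT; exact: (subsetP ST).
apply: (ample_pairing_lt0 a_ample lam_Gamma T_max _ j0T).
  by move=> j jT; rewrite /ops_of_relation c_offT // sub0r oppr_le0; case: ifP.
by rewrite /ops_of_relation c_offT // j0C sub0r oppr_lt0 ltz_nat.
Qed.

End OneParameterSubgroup.

Lemma prim_relE r (C S : {set 'I_r}) (q : 'I_r -> rat) j :
  (j \notin S -> q j = 0) -> prim_rel C S q j = (j \in C)%:R - q j.
Proof.
rewrite /prim_rel => q_supp.
by case: (boolP (j \in S)) => [_|/q_supp ->]; case: (j \in C); rewrite ?subr0 ?sub0r.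
Qed.

Theorem theoremB (R : realType) (n r : nat) (u : 'I_r -> 'rV[int]_n)
    (Sigma : {set {set 'I_r}}) :
  is_fan R u Sigma -> complete_fan R u Sigma -> projective u Sigma ->
  forall C : {set 'I_r}, primitive_collection Sigma C ->
  exists lam : 'I_r -> int, in_Gamma u lam /\
    (forall (x : 'I_r -> R[i]) (a : 'I_r -> int),
        (forall j, j \in C -> x j = 0) -> ample u Sigma a ->
        limit_exists lam x /\ pairing a lam < 0) /\
    (simplicial R u Sigma ->
       forall (S : {set 'I_r}) (q : 'I_r -> rat),
         S \in Sigma ->
         in_relint R u S (\sum_(j in C) uR R u j) ->
         (forall j, 0 <= q j) -> (forall j, j \notin S -> q j = 0) ->
         \sum_(j in C) uR R u j = \sum_(j < r) (ratr (q j) : R) *: uR R u j ->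
         exists2 k : nat, (0 < k)%N &
           forall j, - ((lam j)%:~R : rat) = k%:R * prim_rel C S q j).
Proof.
move=> fan complete _ C primC.
pose uC : 'rV[rat]_n := \sum_(j in C) map_mx (fun z : int => z%:~R) (u j).
have uCE : map_mx ratr uC = \sum_(j in C) uR R u j.
  by rewrite map_mx_sum; apply: eq_bigr => j _; apply/rowP => k; rewrite !mxE; exact: ratr_int.
have [S S_in uC_cone] := complete (\sum_(j in C) uR R u j).
move: (uC_cone); rewrite -uCE => /rat_cone[q [q_ge0 q_supp]]; rewrite uCE => q_rel.
have [k k_gt0 [c cE]] := common_denominator q.
have c_ge0 j : 0 <= c j by rewrite -(ler0z rat) cE mulr_ge0 ?ler0n ?q_ge0.
have c_supp j : j \notin S -> c j = 0.
  by move=> jS; apply/eqP; rewrite -(intr_eq0 rat) cE q_supp ?mulr0.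
have lam_Gamma := ops_of_relation_in_Gamma (int_relation cE q_rel).
exists (ops_of_relation C k c); split=> //; split.
  move=> x a x_C a_ample; split; first exact: ops_of_relation_limit.
  exact: ops_of_relation_pairing_lt0 primC S_in k_gt0 c_supp a_ample lam_Gamma.
move=> simp S' q' S'_in uC_relint _ q'_supp q'_rel.
have S'S := relint_cone_subset fan S'_in S_in uC_relint uC_cone.
have q'q j : q' j = q j.
  apply: (fmorph_inj (@ratr R)); move: j.
  apply: (simplicial_coef_unique simp S_in) => [j jS|j /q_supp ->|].
  - by rewrite q'_supp ?rmorph0 //; apply: contra jS; exact: (subsetP S'S).
  - by rewrite rmorph0.
  - by rewrite -q'_rel -q_rel.
exists k => // j.
rewrite (prim_relE _ (q'_supp j)) q'q /ops_of_relation intrB cE.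
by case: (j \in C) => /=; ring.
Qed.
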